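(* Let $V$ be a real Hilbert space, $W\subset V$ a subspace of finite dimension $m$, $\mathcal M\subset V$ a bounded set, and $Z_N\subset V$ a subspace of finite dimension $N$. Let $\widetilde W^\perp$ be the orthogonal complement of $W$ in $W+Z_N$, and set $\varepsilon_N:=\sup_{u\in\mathcal M}\operatorname{dist}(u,Z_N)$. Define, for $c\in W^\perp$ and linear $B:W\to W^\perp$, $$F(c,B)=\sup_{u\in\mathcal M}\|P_{W^\perp}u-c-B(P_Wu)\|,$$ and suppose $(\bar c,\bar B)$ minimizes $F$ over $\widetilde W^\perp\times\mathcal L(W,\widetilde W^\perp)$. Let $\widetilde A(w)=w+\bar c+\bar B w$. Then, with $E^*_{\mathrm{wca}}(\mathcal M):=\inf\{E_{\mathrm{wc}}(A,\mathcal M): A:W\to V\text{ affine}\}$, $$E^*_{\mathrm{wca}}(\mathcal M)\le E_{\mathrm{wc}}(\widetilde A,\mathcal M)\le E^*_{\mathrm{wca}}(\mathcal M)+\varepsilon_N.$$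
   Context: $P_W$, $P_{W^\perp}$ are orthogonal projections onto $W$ and its orthogonal complement $W^\perp$ in $V$. $\mathcal L(X,Y)$ denotes linear maps from $X$ to $Y$. For a map $A:W\to V$, $E_{\mathrm{wc}}(A,\mathcal M)=\sup\{\|u-A(P_Wu)\|:u\in\mathcal M\}$. $\operatorname{dist}(u,Z_N)=\inf_{z\in Z_N}\|u-z\|$. *)

From HB Require Import structures.
From mathcomp Require Import all_boot all_order all_algebra.
From mathcomp Require Import all_classical all_reals.
From mathcomp Require Import ereal topology normedtype.
Set Implicit Arguments. Unset Strict Implicit. Unset Printing Implicit Defensive.
Import Order.TTheory GRing.Theory Num.Theory.
Import numFieldNormedType.Exports.
Local Open Scope classical_set_scope.
Local Open Scope ring_scope.
Local Open Scope ereal_scope.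
Local Open Scope ring_scope.

Section Defs.
Variables (R : realType) (V : normedModType R).

Definition inner_product (ip : V -> V -> R) : Prop :=
  [/\ forall x y, ip x y = ip y x,
      forall a x y z, ip (a *: x + y) z = a * ip x z + ip y z
    & forall x, ip x x = `|x| ^+ 2].

Definition subspace (W : set V) : Prop :=
  [/\ W 0, forall x y, W x -> W y -> W (x + y)
    & forall (a : R) x, W x -> W (a *: x)].

Definition is_basis (n : nat) (W : set V) (e : 'I_n -> V) : Prop :=
  (forall w, W w <-> exists a : 'I_n -> R, w = \sum_(i < n) a i *: e i) /\
  (forall a : 'I_n -> R, \sum_(i < n) a i *: e i = 0 -> forall i, a i = 0).

Definition subspace_dim (W : set V) (n : nat) : Prop :=
  subspace W /\ exists e : 'I_n -> V, is_basis W e.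

Definition orth_compl (ip : V -> V -> R) (W : set V) : set V :=
  [set v | forall w, W w -> ip v w = 0].

Definition sum_space (W Z : set V) : set V :=
  [set v | exists w z, [/\ W w, Z z & v = w + z]].

Definition is_orth_proj (ip : V -> V -> R) (W : set V) (P : V -> V) : Prop :=
  forall u, W (P u) /\ orth_compl ip W (u - P u).

(* L : W -> X linear (represented as a map on V, only its values on W matter) *)
Definition linear_on (W X : set V) (L : V -> V) : Prop :=
  [/\ forall w, W w -> X (L w),
      forall w1 w2, W w1 -> W w2 -> L (w1 + w2) = L w1 + L w2
    & forall (a : R) w, W w -> L (a *: w) = a *: L w].

Definition affine_on (W : set V) (A : V -> V) : Prop :=
  exists (b : V) (L : V -> V), linear_on W setT L /\ forall w, W w -> A w = b + L w.

Definition bounded_set_V (M : set V) : Prop :=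
  exists r : R, forall u, M u -> `|u| <= r.

Definition dist (u : V) (Z : set V) : \bar R :=
  ereal_inf [set (`|u - z|)%:E | z in Z].

Definition Ewc (PW : V -> V) (A : V -> V) (M : set V) : \bar R :=
  ereal_sup [set (`|u - A (PW u)|)%:E | u in M].

Definition Ewca_star (W : set V) (PW : V -> V) (M : set V) : \bar R :=
  ereal_inf [set Ewc PW A M | A in affine_on W].

(* F(c, B) = sup_{u in M} |P_{W^perp} u - c - B (P_W u)|, with P_{W^perp} = id - P_W *)
Definition Fcost (PW : V -> V) (M : set V) (c : V) (B : V -> V) : \bar R :=
  ereal_sup [set (`|(u - PW u) - c - B (PW u)|)%:E | u in M].

End Defs.

From Pilot Require Import Defs.
From HB Require Import structures.
From mathcomp Require Import all_boot all_order all_algebra.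
From mathcomp Require Import all_classical all_reals.
From mathcomp Require Import ereal topology normedtype.
From mathcomp Require Import lra.
Import Order.TTheory GRing.Theory Num.Theory.
Import numFieldNormedType.Exports.
Local Open Scope classical_set_scope.
Local Open Scope ring_scope.
Set Implicit Arguments. Unset Strict Implicit.

(* Write an affine A : W -> V as A w = b + L w and let Q be the orthogonal
   projection onto W + Z_N.  Projecting the W^perp-part of A onto W + Z_N gives
   the admissible pair c = Q (b - P_W b), B w = Q (L w - P_W (L w)), and for
   a = A (P_W u)
     u - P_W u - c - B (P_W u) = (u - Q u) + Q ((u - a) - P_W (u - a)).
   The first term has norm dist(u, W + Z_N) <= dist(u, Z_N) <= eps_N, the second
   at most |u - a|.  Hence F(c, B) <= E_wc(A) + eps_N, and E_wc(Atilde) is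
   F(cbar, Bbar), which by minimality is below every F(c, B).  The projection Q
   exists because W + Z_N is spanned by finitely many vectors (Gram-Schmidt). *)

Section InnerProduct.
Variables (R : realType) (V : normedModType R) (ip : V -> V -> R).
Hypothesis hip : inner_product ip.

Lemma ipC x y : ip x y = ip y x. Proof. by case: hip. Qed.
Lemma ipxx x : ip x x = `|x| ^+ 2. Proof. by case: hip. Qed.

Lemma ipDl x y z : ip (x + y) z = ip x z + ip y z.
Proof. by case: hip => _ /(_ 1 x y z); rewrite scale1r mul1r. Qed.
Lemma ip0l z : ip 0 z = 0.
Proof. by have := ipDl 0 0 z; rewrite addr0 => /eqP; rewrite -subr_eq subrr => /eqP. Qed.
Lemma ipZl a x z : ip (a *: x) z = a * ip x z.
Proof. by case: hip => _ /(_ a x 0 z); rewrite addr0 ip0l addr0. Qed.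
Lemma ipBl x y z : ip (x - y) z = ip x z - ip y z.
Proof. by rewrite ipDl -scaleN1r ipZl mulN1r. Qed.

Lemma ip0r z : ip z 0 = 0. Proof. by rewrite ipC ip0l. Qed.
Lemma ipDr x y z : ip z (x + y) = ip z x + ip z y.
Proof. by rewrite ipC ipDl !(ipC z). Qed.
Lemma ipZr a x z : ip z (a *: x) = a * ip z x.
Proof. by rewrite ipC ipZl ipC. Qed.

Lemma ipxx_eq0 x : ip x x = 0 -> x = 0.
Proof. by rewrite ipxx => /eqP; rewrite sqrf_eq0 => /eqP /normr0_eq0. Qed.

Lemma norm_le_orthD x y : ip x y = 0 -> `|x| <= `|x + y|.
Proof.
move=> xy0; have pyth : `|x + y| ^+ 2 = `|x| ^+ 2 + `|y| ^+ 2.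
  by rewrite -!ipxx ipDl !ipDr (ipC y x) xy0 add0r addr0.
have := normr_ge0 x; have := normr_ge0 (x + y); have := sqr_ge0 `|y|; nra.
Qed.

Lemma ip_orth_subspace x : Defs.subspace [set p | ip x p = 0].
Proof.
split => /= [|p q hp hq|a p hp]; first exact: ip0r.
  by rewrite ipDr hp hq addr0.
by rewrite ipZr hp mulr0.
Qed.

Lemma orth_compl_subspace U : Defs.subspace (orth_compl ip U).
Proof.
split => [w _|p q hp hq w hw|a p hp w hw]; first exact: ip0l.
  by rewrite ipDl hp // hq // addr0.
by rewrite ipZl hp // mulr0.
Qed.

End InnerProduct.

Section Subspace.
Variables (R : realType) (V : normedModType R).

Lemma subspaceD (S : set V) x y : Defs.subspace S -> S x -> S y -> S (x + y).
Proof. by case=> _ + _; apply. Qed.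
Lemma subspaceZ (S : set V) a x : Defs.subspace S -> S x -> S (a *: x).
Proof. by case=> _ _; apply. Qed.
Lemma subspaceB (S : set V) x y : Defs.subspace S -> S x -> S y -> S (x - y).
Proof. by move=> sS Sx Sy; rewrite -scaleN1r; apply: subspaceD => //; apply: subspaceZ. Qed.

Lemma subspace_sum (S : set V) n (e : 'I_n -> V) (a : 'I_n -> R) :
  Defs.subspace S -> (forall i, S (e i)) -> S (\sum_(i < n) a i *: e i).
Proof.
move=> sS Se; apply: big_ind => [|x y|i _]; first by case: sS.
  exact: subspaceD.
exact: subspaceZ.
Qed.

Lemma sum_space_subspace (W Z : set V) :
  Defs.subspace W -> Defs.subspace Z -> Defs.subspace (sum_space W Z).
Proof.
move=> sW sZ; split.
- by exists 0, 0; split; [case: sW|case: sZ|rewrite addr0].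
- move=> _ _ [w1 [z1 [W1 Z1 ->]]] [w2 [z2 [W2 Z2 ->]]].
  by exists (w1 + w2), (z1 + z2); split; [exact: subspaceD|exact: subspaceD|rewrite addrACA].
- move=> a _ [w [z [Ww Zz ->]]].
  by exists (a *: w), (a *: z); split; [exact: subspaceZ|exact: subspaceZ|rewrite scalerDr].
Qed.

Lemma sum_space_subl (W Z : set V) : Defs.subspace Z -> W `<=` sum_space W Z.
Proof. by move=> [Z0 _ _] w Ww; exists w, 0; rewrite addr0. Qed.
Lemma sum_space_subr (W Z : set V) : Defs.subspace W -> Z `<=` sum_space W Z.
Proof. by move=> [W0 _ _] z Zz; exists 0, z; rewrite add0r. Qed.

Definition spans (s : seq V) (U : set V) :=
  (forall v, v \in s -> U v) /\
  forall S, Defs.subspace S -> (forall v, v \in s -> S v) -> U `<=` S.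

Lemma basis_spans n (W : set V) (e : 'I_n -> V) :
  is_basis W e -> spans (map e (enum 'I_n)) W.
Proof.
move=> [hW _]; split => [_ /mapP[i _ ->]|S sS Se w /hW[a ->]].
  apply/hW; exists (fun j => (j == i)%:R).
  rewrite (bigD1 i) //= eqxx scale1r big1 ?addr0 // => j /negbTE ->.
  exact: scale0r.
by apply: subspace_sum => // i; apply/Se/map_f; rewrite mem_enum.
Qed.

Lemma spans_sum_space s1 s2 (W Z : set V) :
  Defs.subspace W -> Defs.subspace Z ->
  spans s1 W -> spans s2 Z -> spans (s1 ++ s2) (sum_space W Z).
Proof.
move=> sW sZ [W1 minW] [Z2 minZ]; split => [v|S sS Ss _ [w [z [Ww Zz ->]]]].
  by rewrite mem_cat => /orP[/W1|/Z2]; [apply: sum_space_subl|apply: sum_space_subr].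
by apply: subspaceD => //; [apply: (minW S) | apply: (minZ S)] => // v hv;
  apply: Ss; rewrite mem_cat hv ?orbT.
Qed.

End Subspace.

Section ErealBounds.
Variable R : realType.
Local Open Scope ereal_scope.

Lemma ereal_sup_leD T (S : set T) (f g h : T -> \bar R) :
  (forall x, S x -> f x <= g x + h x) ->
  ereal_sup (f @` S) <= ereal_sup (g @` S) + ereal_sup (h @` S).
Proof.
move=> fgh; apply: ge_ereal_sup => _ [x Sx <-].
by apply: (le_trans (fgh x Sx)); apply: leeD; apply: ereal_sup_ubound; exists x.
Qed.

Lemma le_ereal_infDr (S : set (\bar R)) x e : e \is a fin_num ->
  (forall y, S y -> x <= y + e) -> x <= ereal_inf S + e.
Proof.
by move=> efin xSe; rewrite -leeBlDr //; apply: le_ereal_inf_tmp => y /xSe; rewrite leeBlDr.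
Qed.

End ErealBounds.

Section Dist.
Variables (R : realType) (V : normedModType R).
Local Open Scope ereal_scope.

Lemma dist_ge0 (u : V) (Z : set V) : 0 <= dist u Z.
Proof. by apply: le_ereal_inf_tmp => _ [z _ <-]; rewrite lee_fin. Qed.

Lemma dist_le_norm (u : V) (Z : set V) : Z 0%R -> dist u Z <= (`|u|)%:E.
Proof. by move=> Z0; apply: ereal_inf_lbound; exists 0%R; rewrite ?subr0. Qed.

Lemma sup_dist_fin_num (M Z : set V) u : bounded_set_V M -> Z 0%R -> M u ->
  ereal_sup [set dist v Z | v in M] \is a fin_num.
Proof.
move=> [r Mr] Z0 Mu; rewrite ge0_fin_numE; last first.
  by apply: (le_trans (dist_ge0 u Z)); apply: ereal_sup_ubound; exists u.
apply: (@le_lt_trans _ _ r%:E); last exact: ltry.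
apply: ge_ereal_sup => _ [v Mv <-].
by apply: (le_trans (dist_le_norm v Z0)); rewrite lee_fin Mr.
Qed.

End Dist.

Section OrthProj.
Variables (R : realType) (V : normedModType R) (ip : V -> V -> R).
Hypothesis hip : inner_product ip.

(* Gram-Schmidt: adjoin g = v - Q v to the current projection Q.  When v already
   lies in the span, g = 0 and the junk value x / 0 = 0 keeps Q unchanged. *)
Lemma exists_orth_proj_seq (s : seq V) : exists Q : V -> V,
  (forall x S, Defs.subspace S -> (forall v, v \in s -> S v) -> S (Q x)) /\
  (forall x v, v \in s -> ip (x - Q x) v = 0).
Proof.
elim: s => [|v s [Q [spanQ orthQ]]].
  by exists (fun=> 0); split=> // x S [].
have orthQQ y z : ip (y - Q y) (Q z) = 0.
  by apply: (spanQ z [set p | ip (y - Q y) p = 0]);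
    [exact: ip_orth_subspace | move=> w; apply: orthQ].
have [g [vE orth_g orth_gQ]] : exists g, [/\ v = g + Q v,
    forall w, w \in s -> ip g w = 0 & forall z, ip g (Q z) = 0].
  by exists (v - Q v); split; [rewrite subrK | exact: orthQ | exact: orthQQ].
exists (fun x => Q x + (ip x g / ip g g) *: g); split.
  move=> x S sS Svs; have Ss w : w \in s -> S w by move=> ws; apply: Svs; rewrite inE ws orbT.
  have gE : g = v - Q v by rewrite {1}vE addrK.
  apply: subspaceD => //; first exact: spanQ.
  apply: subspaceZ => //; rewrite gE; apply: subspaceB => //; last exact: spanQ.
  by apply: Svs; rewrite mem_head.
move=> x w; rewrite opprD addrA inE => /orP[/eqP ->|ws]; last first.
  by rewrite (ipBl hip) (ipZl hip) (orth_g _ ws) mulr0 subr0 orthQ.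
have [gg0|gg_neq0] := eqVneq (ip g g) 0.
  by move/(ipxx_eq0 hip): gg0 => g0; rewrite g0 scaler0 subr0 vE g0 add0r orthQQ.
rewrite vE (ipDr hip) !(ipBl hip (x - Q x)) !(ipZl hip) orthQQ orth_gQ mulr0 subr0 addr0.
by rewrite (ipBl hip x) (ipC hip (Q x)) orth_gQ subr0 divfK // subrr.
Qed.

Lemma exists_orth_proj (s : seq V) (U : set V) :
  Defs.subspace U -> spans s U -> exists P, is_orth_proj ip U P.
Proof.
move=> sU [Us minU]; have [Q [spanQ orthQ]] := exists_orth_proj_seq s.
exists Q => x; split; first exact: spanQ.
by move=> y /(minU _ (ip_orth_subspace hip (x - Q x))); apply => v /orthQ; apply.
Qed.

Variables (U : set V) (P : V -> V).
Hypotheses (sU : Defs.subspace U) (hP : is_orth_proj ip U P).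

Lemma orth_proj_in x : U (P x). Proof. by case: (hP x). Qed.
Lemma orth_proj_orth x w : U w -> ip (x - P x) w = 0.
Proof. by case: (hP x) => _; apply. Qed.

Lemma orth_proj_unique v p : U p -> orth_compl ip U (v - p) -> P v = p.
Proof.
move=> Up vp; have Ud : U (P v - p) by apply: subspaceB => //; apply: orth_proj_in.
apply/eqP; rewrite -subr_eq0; apply/eqP/(ipxx_eq0 hip).
rewrite {1}(_ : P v - p = (v - p) - (v - P v)); last first.
  by rewrite opprB [RHS]addrC addrA subrK.
by rewrite (ipBl hip) vp // orth_proj_orth // subrr.
Qed.

Lemma orth_proj_id y : U y -> P y = y.
Proof. by move=> Uy; apply: orth_proj_unique => // w _; rewrite subrr (ip0l hip). Qed.

Lemma orth_projD x y : P (x + y) = P x + P y.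
Proof.
apply: orth_proj_unique; first by apply: subspaceD => //; apply: orth_proj_in.
rewrite opprD addrACA.
by apply: subspaceD (orth_compl_subspace hip U) _ _ => w; apply: orth_proj_orth.
Qed.

Lemma orth_projZ a x : P (a *: x) = a *: P x.
Proof.
apply: orth_proj_unique; first by apply: subspaceZ => //; apply: orth_proj_in.
rewrite -scalerBr; apply: subspaceZ (orth_compl_subspace hip U) _ => w.
exact: orth_proj_orth.
Qed.

Lemma orth_projB x y : P (x - y) = P x - P y.
Proof. by rewrite orth_projD -scaleN1r orth_projZ scaleN1r. Qed.

Lemma orth_proj_dist_le x z : U z -> `|x - P x| <= `|x - z|.
Proof.
move=> Uz; have := norm_le_orthD hip (x := x - P x) (y := P x - z).
rewrite [x - P x + _]addrA subrK; apply; apply: orth_proj_orth.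
by apply: subspaceB => //; apply: orth_proj_in.
Qed.

Lemma orth_proj_norm_le x : `|P x| <= `|x|.
Proof.
have := norm_le_orthD hip (x := P x) (y := x - P x).
by rewrite subrKC (ipC hip); apply; apply: orth_proj_orth; apply: orth_proj_in.
Qed.

Lemma orth_proj_le_dist (Z : set V) x : Z `<=` U -> ((`|x - P x|)%:E <= dist x Z)%E.
Proof.
move=> ZU; apply: le_ereal_inf_tmp => _ [z Zz <-].
by rewrite lee_fin; apply: orth_proj_dist_le; apply: ZU.
Qed.

Lemma orth_proj_orth_compl (W : set V) x :
  W `<=` U -> orth_compl ip W x -> orth_compl ip W (P x).
Proof.
move=> WU Wx w Ww; have := orth_proj_orth x (WU w Ww).
by rewrite (ipBl hip) Wx // sub0r => /eqP; rewrite oppr_eq0 => /eqP.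
Qed.

End OrthProj.

Section Competitor.
Variables (R : realType) (V : normedModType R) (ip : V -> V -> R).
Variables (W U : set V) (PW Q : V -> V).
Hypotheses (hip : inner_product ip) (sW : Defs.subspace W) (sU : Defs.subspace U).
Hypotheses (WU : W `<=` U) (hPW : is_orth_proj ip W PW) (hQ : is_orth_proj ip U Q).

Lemma orth_proj_residual_le u a :
  `|u - PW u - Q (a - PW a)| <= `|u - a| + `|u - Q u|.
Proof.
set k := (u - a) - PW (u - a).
have -> : u - PW u - Q (a - PW a) = (u - Q u) + Q k.
  rewrite /k !(orth_projB hip sU hQ) (orth_projB hip sW hPW) (orth_projB hip sU hQ (PW u)).
  rewrite (orth_proj_id hip sU hQ (WU (orth_proj_in hPW u))).
  rewrite [RHS]addrA [u - Q u + _]addrA subrK !opprB !addrA.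
  by rewrite [RHS]addrAC [u - Q a - _]addrAC [RHS]addrAC.
rewrite addrC; apply: (le_trans (ler_normD _ _)); rewrite lerD2r.
apply: (le_trans (orth_proj_norm_le hip hQ k)).
have [W0 _ _] := sW.
by have := orth_proj_dist_le hip sW hPW (u - a) W0; rewrite subr0.
Qed.

Lemma affine_competitor A : affine_on W A ->
  exists c B, [/\ (orth_compl ip W `&` U) c, linear_on W (orth_compl ip W `&` U) B
    & forall w, W w -> c + B w = Q (A w - PW (A w))].
Proof.
move=> [b [L [[_ LD LZ] AE]]].
have resid_in x : (orth_compl ip W `&` U) (Q (x - PW x)).
  split; last exact: orth_proj_in hQ _.
  by apply: (orth_proj_orth_compl hip hQ) => // w; apply: (orth_proj_orth hPW).
exists (Q (b - PW b)), (fun w => Q (L w - PW (L w))); split => //.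
- split => // [w1 w2 W1 W2|r w Ww].
    rewrite LD // (orth_projD hip sW hPW) opprD addrACA.
    exact: (orth_projD hip sU hQ).
  by rewrite LZ // (orth_projZ hip sW hPW) -scalerBr (orth_projZ hip sU hQ).
- move=> w Ww; rewrite AE // (orth_projD hip sW hPW) opprD addrACA.
  by rewrite -(orth_projD hip sU hQ).
Qed.

Lemma affine_competitor_Fcost_le (M Z : set V) A : Z `<=` U -> affine_on W A ->
  exists c B, [/\ (orth_compl ip W `&` U) c, linear_on W (orth_compl ip W `&` U) B
    & (Fcost PW M c B <= Ewc PW A M + ereal_sup [set dist u Z | u in M])%E].
Proof.
move=> ZU /affine_competitor[c [B [Wt_c linB cBE]]]; exists c, B; split => //.
apply: ereal_sup_leD => u _; rewrite -addrA -opprD cBE; last exact: orth_proj_in hPW u.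
apply: (@le_trans _ _ (`|u - A (PW u)| + `|u - Q u|)%:E).
  by rewrite lee_fin orth_proj_residual_le.
by rewrite EFinD leeD2l //; apply: (orth_proj_le_dist hip sU hQ).
Qed.

End Competitor.

Lemma Ewc_shear (R : realType) (V : normedModType R) (PW : V -> V) (M : set V) c B :
  Ewc PW (fun w => w + c + B w) M = Fcost PW M c B.
Proof.
by rewrite /Ewc /Fcost; congr ereal_sup; apply: eq_imagel => u _; rewrite !opprD !addrA.
Qed.

Lemma affine_shear (R : realType) (V : normedModType R) (W X : set V) c B :
  linear_on W X B -> affine_on W (fun w => w + c + B w).
Proof.
move=> [_ BD BZ]; exists c, (fun w => w + B w).
split; last by move=> w _; rewrite addrAC addrC.
split => // [w1 w2 W1 W2|a w Ww]; first by rewrite BD // addrACA.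
by rewrite BZ // scalerDr.
Qed.

Theorem mainTheorem3 (R : realType) (V : completeNormedModType R)
  (ip : V -> V -> R) (W Z M : set V) (m N : nat) (PW : V -> V)
  (cbar : V) (Bbar : V -> V) :
  inner_product ip ->
  subspace_dim W m ->
  subspace_dim Z N ->
  bounded_set_V M ->
  is_orth_proj ip W PW ->
  let Wtperp := orth_compl ip W `&` sum_space W Z in
  Wtperp cbar -> linear_on W Wtperp Bbar ->
  (forall c B, Wtperp c -> linear_on W Wtperp B ->
     (Fcost PW M cbar Bbar <= Fcost PW M c B)%E) ->
  let Atilde := fun w => w + cbar + Bbar w in
  let epsN := ereal_sup [set dist u Z | u in M] in
  (Ewca_star W PW M <= Ewc PW Atilde M)%E /\
  (Ewc PW Atilde M <= Ewca_star W PW M + epsN)%E.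
Proof.
move=> hip [sW [eW bW]] [sZ [eZ bZ]] boundedM hPW Wt Wt_cbar linBbar minF At eps.
have sU := sum_space_subspace sW sZ.
have [Q hQ] := exists_orth_proj hip sU
  (spans_sum_space sW sZ (basis_spans bW) (basis_spans bZ)).
split; first by apply: ereal_inf_lbound; exists At => //; apply: affine_shear linBbar.
rewrite /At Ewc_shear; apply: ge_ereal_sup => _ [u Mu <-].
apply: le_ereal_infDr => [|_ [A affA <-]].
  by apply: (sup_dist_fin_num boundedM _ Mu); case: sZ.
have [c [B [Wt_c linB FcB]]] := affine_competitor_Fcost_le hip sW sU
  (sum_space_subl sZ) hPW hQ M (sum_space_subr sW) affA.
apply: le_trans (le_trans (minF c B Wt_c linB) FcB).
by apply: ereal_sup_ubound; exists u.
Qed.
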